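(* Let $a>0$, $\alpha>0$, $b\ge 0$, $\sigma^2>0$ and $n>0$ be real numbers. For $s\in(0,n)$ let $V_{\mathrm{FT+PPI}}(s)=\frac{a s^{-\alpha}+b}{n-s}$ and $V_{\mathrm{mean}}=\sigma^2/n$, and define $$q(s)=\sigma^2(n-s)-n\big(a s^{-\alpha}+b\big),\qquad s\in(0,n).$$ Then: (i) there exists $s\in(0,n)$ with $V_{\mathrm{FT+PPI}}(s)<V_{\mathrm{mean}}$ if and only if $\sup_{s\in(0,n)} q(s)>0$; (ii) $q$ is strictly concave on $(0,\infty)$, and there exists $s\in(0,n)$ with $V_{\mathrm{FT+PPI}}(s)<V_{\mathrm{mean}}$ if and only if $$\frac{b}{\sigma^2}<1-\Big(1+\frac1\alpha\Big)\Big(\frac{a\alpha n^{-\alpha}}{\sigma^2}\Big)^{1/(\alpha+1)}.$$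
   Context: Interpretation: $\sigma^2=\mathrm{Var}(Y)$; the residual variance of a predictor fine-tuned on $s$ labeled samples is assumed to follow the scaling law $\mathrm{Var}(Y-f^{(s)}(X))=a s^{-\alpha}+b$; in the regime of infinitely many unlabeled samples the prediction-powered estimator using the remaining $n-s$ labeled samples has variance $V_{\mathrm{FT+PPI}}(s)$, while the sample mean of all $n$ labeled samples has variance $V_{\mathrm{mean}}$. *)

From mathcomp Require Import all_boot all_order all_algebra.
From mathcomp Require Import all_classical all_reals all_analysis.
Set Implicit Arguments. Unset Strict Implicit. Unset Printing Implicit Defensive.
Import Order.TTheory GRing.Theory Num.Theory.
Local Open Scope ring_scope.
Local Open Scope classical_set_scope.

Definition V_FTPPI (R : realType) (a alpha b n s : R) : R :=
  (a * s `^ (- alpha) + b) / (n - s).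

Definition V_mean (R : realType) (sigma2 n : R) : R := sigma2 / n.

Definition qfun (R : realType) (sigma2 a alpha b n s : R) : R :=
  sigma2 * (n - s) - n * (a * s `^ (- alpha) + b).

Definition strictly_concave_on (R : realType) (D : set R) (f : R -> R) : Prop :=
  forall x y t : R, D x -> D y -> x != y -> 0 < t -> t < 1 ->
    t * f x + (1 - t) * f y < f (t * x + (1 - t) * y).

From mathcomp Require Import all_boot all_order all_algebra.
From mathcomp Require Import all_classical all_reals all_analysis.
From mathcomp Require Import ring lra.
Set Implicit Arguments.
Unset Strict Implicit.
Unset Printing Implicit Defensive.
Import Order.TTheory GRing.Theory Num.Theory.
Local Open Scope ring_scope.
Local Open Scope classical_set_scope.

(* Since n - s > 0, V_FTPPI(s) < V_mean is equivalent to q(s) > 0.  By the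
   Bernoulli inequality u^-alpha > 1 - alpha (u - 1), the map s |-> s^-alpha
   lies strictly above its tangent lines, so q lies strictly below its own and
   is strictly concave.  The tangent of q is horizontal at s = n r, where
   r^(alpha+1) = a alpha n^-alpha / sigma^2, so max q = q(n r) =
   n ((1 - (1 + 1/alpha) r) sigma^2 - b); when this is positive, r < 1 and the
   maximiser n r lies in (0, n). *)

Section Generic.
Variable R : realType.

Lemma lt_sup_iff (S : set R) (x : R) :
  has_sup S -> x < sup S <-> exists2 y, S y & x < y.
Proof.
move=> supS; split; first exact: sup_gt (proj1 supS).
by move=> [y Sy /lt_le_trans]; apply; apply: sup_upper_bound.
Qed.

Lemma strictly_concave_on_lt_tangent (D : set R) (f f' : R -> R) :
  (forall x y t, D x -> D y -> 0 < t < 1 -> D (t * x + (1 - t) * y)) ->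
  (forall x z, D x -> D z -> x != z -> f x < f z + f' z * (x - z)) ->
  strictly_concave_on D f.
Proof.
move=> convD tangent x y t Dx Dy xy t0 t1.
set z := t * x + (1 - t) * y.
have t1' : 0 < 1 - t by rewrite subr_gt0.
have Dz : D z by apply: convD => //; rewrite t0 t1.
have xz : x != z.
  rewrite -subr_eq0 (_ : x - z = (1 - t) * (x - y)); last by rewrite /z; ring.
  by apply: mulf_neq0; [rewrite gt_eqF | rewrite subr_eq0].
have yz : y != z.
  rewrite -subr_eq0 (_ : y - z = t * (y - x)); last by rewrite /z; ring.
  by apply: mulf_neq0; [rewrite gt_eqF | rewrite subr_eq0 eq_sym].
have := tangent x z Dx Dz xz; rewrite -(ltr_pM2l t0) => ltx.
have := tangent y z Dy Dz yz; rewrite -(ltr_pM2l t1') => lty.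
have -> : f z = t * (f z + f' z * (x - z)) + (1 - t) * (f z + f' z * (y - z)).
  by rewrite /z; ring.
exact: ltrD.
Qed.

Lemma ln_lt_subr1 (u : R) : 0 < u -> u != 1 -> ln u < u - 1.
Proof.
move=> u0 u1; have lnu0 : ln u != 0.
  by apply: contra u1 => /eqP lnu0; rewrite -[u]lnK ?posrE // lnu0 expR0.
by have := expR_gt1Dx lnu0; rewrite lnK ?posrE //; lra.
Qed.

Lemma powRN_gt_bernoulli (alpha u : R) : 0 < alpha -> 0 < u -> u != 1 ->
  1 - alpha * (u - 1) < u `^ (- alpha).
Proof.
move=> alpha0 u0 u1; rewrite /powR gt_eqF //.
apply: lt_le_trans (expR_ge1Dx _); rewrite mulNr ltrD2l ltrN2.
by rewrite ltr_pM2l // ln_lt_subr1.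
Qed.

Lemma powRN_gt_tangent (alpha x z : R) : 0 < alpha -> 0 < x -> 0 < z ->
  x != z -> z `^ (- alpha) * (1 - alpha * (x / z - 1)) < x `^ (- alpha).
Proof.
move=> alpha0 x0 z0 xz.
have -> : x `^ (- alpha) = z `^ (- alpha) * (x / z) `^ (- alpha).
  by rewrite -powRM ?(ltW z0) ?divr_ge0 ?ltW // mulrC divfK ?gt_eqF.
rewrite ltr_pM2l ?powR_gt0 //; apply: powRN_gt_bernoulli; rewrite ?divr_gt0 //.
by apply: contra xz => /eqP xz1; rewrite -[x](divfK (lt0r_neq0 z0)) xz1 mul1r.
Qed.

End Generic.

Section FineTuningTradeoff.
Variables (R : realType) (a alpha b sigma2 n : R).
Hypotheses (ha : 0 < a) (halpha : 0 < alpha) (hb : 0 <= b)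
  (hsigma2 : 0 < sigma2) (hn : 0 < n).

Local Notation q := (qfun sigma2 a alpha b n).

Lemma V_FTPPI_lt_V_mean (s : R) : 0 < s < n ->
  V_FTPPI a alpha b n s < V_mean sigma2 n <-> 0 < q s.
Proof.
move=> /andP[_ sn]; rewrite /V_FTPPI /V_mean /qfun.
rewrite ltr_pdivrMr ?subr_gt0 // mulrAC ltr_pdivlMr //.
by split=> ?; lra.
Qed.

Lemma exists_V_FTPPI_lt_V_mean_iff :
  (exists s, 0 < s < n /\ V_FTPPI a alpha b n s < V_mean sigma2 n) <->
  (exists s, 0 < s < n /\ 0 < q s).
Proof.
by split=> -[s [sn lt]]; exists s; have := V_FTPPI_lt_V_mean sn; tauto.
Qed.

Lemma qfun_ub (s : R) : 0 < s -> q s <= sigma2 * n.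
Proof.
move=> s0; rewrite /qfun.
have : 0 <= n * (a * s `^ (- alpha) + b).
  by rewrite mulr_ge0 ?addr_ge0 ?mulr_ge0 ?powR_ge0 ?(ltW hn) ?(ltW ha).
have : 0 <= sigma2 * s by rewrite mulr_ge0 ?(ltW hsigma2) ?(ltW s0).
lra.
Qed.

Lemma has_sup_qfun : has_sup [set q s | s in `]0, n[].
Proof.
split.
  exists (q (n / 2)), (n / 2) => //=.
  by rewrite in_itv /= divr_gt0 //= ltr_pdivrMr // ltr_pMr // ltr1n.
by exists (sigma2 * n) => _ [s /= /[!in_itv] /= /andP[s0 _] <-]; apply: qfun_ub.
Qed.

Lemma sup_qfun_gt0_iff :
  0 < sup [set q s | s in `]0, n[] <-> exists s, 0 < s < n /\ 0 < q s.
Proof.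
rewrite lt_sup_iff; last exact: has_sup_qfun.
split=> [[_ [s /= /[!in_itv] /= sn <-] qs0]|[s [sn qs0]]]; first by exists s.
by exists (q s) => //; exists s; rewrite //= in_itv.
Qed.

Definition qfun_slope (z : R) := n * alpha * (a * z `^ (- alpha)) / z - sigma2.

Lemma qfun_lt_tangent (x z : R) : 0 < x -> 0 < z -> x != z ->
  q x < q z + qfun_slope z * (x - z).
Proof.
move=> x0 z0 xz; have := powRN_gt_tangent halpha x0 z0 xz.
rewrite -(ltr_pM2l (mulr_gt0 hn ha)) /qfun /qfun_slope.
have -> : x / z - 1 = (x - z) / z by field; rewrite gt_eqF.
lra.
Qed.

Lemma qfun_le_tangent (x z : R) : 0 < x -> 0 < z ->
  q x <= q z + qfun_slope z * (x - z).
Proof.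
move=> x0 z0; have [->|xz] := eqVneq x z; first by rewrite subrr mulr0 addr0.
exact/ltW/qfun_lt_tangent.
Qed.

Lemma qfun_strictly_concave : strictly_concave_on `]0, +oo[ q.
Proof.
apply: (strictly_concave_on_lt_tangent (f' := qfun_slope)).
  move=> x y t /= /[!in_itv] /= /andP[x0 _] /andP[y0 _] /andP[t0 t1].
  by rewrite andbT addr_gt0 // mulr_gt0 // subr_gt0.
by move=> x z /= /[!in_itv] /= /andP[x0 _] /andP[z0 _]; apply: qfun_lt_tangent.
Qed.

Let c := a * alpha * n `^ (- alpha) / sigma2.
Let r := c `^ ((alpha + 1)^-1).

Let c_gt0 : 0 < c.
Proof. by rewrite divr_gt0 // !mulr_gt0 // powR_gt0. Qed.

Let r_gt0 : 0 < r.
Proof. exact: powR_gt0. Qed.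

Lemma mul_powRN_opt : a * (n * r) `^ (- alpha) = sigma2 * r / alpha.
Proof.
have r_powRD1 : r `^ alpha * r = c.
  rewrite -{2}[r]powRr1 ?ltW // -powRD; last by rewrite (gt_eqF r_gt0) implybT.
  by rewrite -powRrM mulVf ?powRr1 ?ltW // gt_eqF // ltr_wpDl // ltW.
have -> : (n * r) `^ (- alpha) = n `^ (- alpha) * r / c.
  rewrite powRM ?ltW // (powRN r) -r_powRD1.
  by field; rewrite !gt_eqF ?powR_gt0.
by rewrite /c; field; rewrite !gt_eqF ?powR_gt0.
Qed.

Lemma qfun_slope_opt : qfun_slope (n * r) = 0.
Proof.
by rewrite /qfun_slope mul_powRN_opt; field; rewrite !gt_eqF.
Qed.

Lemma qfun_opt : q (n * r) = n * ((1 - (1 + alpha^-1) * r) * sigma2 - b).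
Proof. by rewrite /qfun mul_powRN_opt; field; rewrite gt_eqF. Qed.

Lemma qfun_le_opt (s : R) : 0 < s -> q s <= q (n * r).
Proof.
move=> s0; have := qfun_le_tangent s0 (mulr_gt0 hn r_gt0).
by rewrite qfun_slope_opt mul0r addr0.
Qed.

Lemma exists_qfun_gt0_iff :
  (exists s, 0 < s < n /\ 0 < q s) <-> b / sigma2 < 1 - (1 + alpha^-1) * r.
Proof.
have r_le : r <= (1 + alpha^-1) * r by rewrite ler_peMl ?lerDl ?invr_ge0 ?ltW.
rewrite ltr_pdivrMr //; split.
  move=> [s [/andP[s0 _] qs0]]; have := lt_le_trans qs0 (qfun_le_opt s0).
  by rewrite qfun_opt pmulr_rgt0 // subr_gt0.
move=> hopt; exists (n * r); split; last by rewrite qfun_opt pmulr_rgt0 // subr_gt0.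
have : 0 < 1 - (1 + alpha^-1) * r.
  by rewrite -(pmulr_lgt0 _ hsigma2); apply: le_lt_trans hb hopt.
by rewrite mulr_gt0 // gtr_pMr //; lra.
Qed.

End FineTuningTradeoff.

Theorem proposition3 (R : realType) (a alpha b sigma2 n : R)
  (ha : 0 < a) (halpha : 0 < alpha) (hb : 0 <= b) (hsigma2 : 0 < sigma2)
  (hn : 0 < n) :
  ((exists s : R, 0 < s < n /\ V_FTPPI a alpha b n s < V_mean sigma2 n) <->
     0 < sup [set qfun sigma2 a alpha b n s | s in `]0, n[]) /\
  (strictly_concave_on `]0, +oo[ (qfun sigma2 a alpha b n) /\
   ((exists s : R, 0 < s < n /\ V_FTPPI a alpha b n s < V_mean sigma2 n) <->
     b / sigma2 < 1 - (1 + alpha^-1) *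
        ((a * alpha * n `^ (- alpha)) / sigma2) `^ ((alpha + 1)^-1))).
Proof.
rewrite exists_V_FTPPI_lt_V_mean_iff //.
split; first by rewrite sup_qfun_gt0_iff.
split; first exact: qfun_strictly_concave.
exact: exists_qfun_gt0_iff.
Qed.
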